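(* Let $(E,\mathscr{T},\le)$ be a locally compact $T_2$-preordered Tychonoff space with $G(\le)=\bigcap_{f\in\mathcal{F}}G_f$, and let $\mathcal{H}\subseteq\mathcal{F}$ with $G(\le)=\bigcap_{h\in\mathcal{H}}G_h$. Then the $\mathcal{H}$-compactification and the $i(\mathcal{H})$-compactification are equivalent.
   Context: $T_2$-preordered: the graph $G(\le)=\{(x,y):x\le y\}$ is closed in $E\times E$. $\mathcal{F}$ is the family of continuous isotone functions $f:E\to[0,1]$; $G_f=\{(x,y):f(x)\le f(y)\}$. $\mathcal{C}$ is the family of continuous functions $E\to[0,1]$ constant outside a compact set. For $\mathcal{H}\subseteq\mathcal{F}$ with $G(\le)=\bigcap_{h\in\mathcal{H}}G_h$, the $\mathcal{H}$-compactification is $c:E\to[0,1]^{\mathcal{H}\cup\mathcal{C}}$, $c(x)=(g(x))_{g\in\mathcal{H}\cup\mathcal{C}}$, with $cE$ the closure of $c(E)$, induced product topology, and preorder $x\le_c y$ iff $x_h\le y_h$ for all $h\in\mathcal{H}$. $i(\mathcal{H})$ denotes the set of $f\in\mathcal{F}$ such that $f\circ c^{-1}:c(E)\to[0,1]$ extends to a continuous isotone function on $(cE,\le_c)$, where $c$ is the $\mathcal{H}$-compactification (so $\mathcal{H}\subseteq i(\mathcal{H})$ and $i(\mathcal{H})$ also represents $\le$). For preorder compactifications, $c_1\le c_2$ means there is a continuous isotone $C:c_2E\to c_1E$ with $C\circ c_2=c_1$; equivalent means $c_1\le c_2$ and $c_2\le c_1$. *)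

From HB Require Import structures.
From mathcomp Require Import all_boot all_order all_algebra.
From mathcomp Require Import all_classical all_reals all_analysis.
Unset Printing Implicit Defensive.
Import Order.TTheory GRing.Theory Num.Theory numFieldNormedType.Exports.
Local Open Scope classical_set_scope.
Local Open Scope ring_scope.

Section PreorderCompactification.
Context {R : realType} {E : topologicalType}.

Definition loc_compact : Prop :=
  forall x : E, exists K : set E, compact K /\ nbhs x K.

Definition is_preorder (le : E -> E -> Prop) : Prop :=
  (forall x, le x x) /\ (forall x y z, le x y -> le y z -> le x z).

Definition graph (le : E -> E -> Prop) : set (E * E) :=
  [set xy | le xy.1 xy.2].

Definition T2_preordered (le : E -> E -> Prop) : Prop := closed (graph le).

Definition unit_valued (f : E -> R) : Prop := forall x, 0 <= f x <= 1.

Definition famF (le : E -> E -> Prop) : set (E -> R) :=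
  [set f : E -> R | continuous (f : E -> R) /\ unit_valued f /\ (forall x y, le x y -> f x <= f y)].

Definition graphf (f : E -> R) : set (E * E) := [set xy | f xy.1 <= f xy.2].

Definition represents (le : E -> E -> Prop) (H : set (E -> R)) : Prop :=
  graph le = \bigcap_(h in H) graphf h.

Definition famC : set (E -> R) :=
  [set g : E -> R | continuous (g : E -> R) /\ unit_valued g /\
     exists K : set E, compact K /\ exists a : R, forall x, ~ K x -> g x = a].

Definition idx (H : set (E -> R)) : Type := {g : E -> R | (H `|` famC) g}.

(* the H-compactification map c : E -> [0,1]^(H \cup C) (product topology) *)
Definition cmap (H : set (E -> R)) : E -> {ptws idx H -> R} :=
  fun x => fun g => proj1_sig g x.

Definition cE (H : set (E -> R)) : set {ptws idx H -> R} := closure [set cmap H x | x in [set: E]].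

Definition le_c (H : set (E -> R)) (p q : {ptws idx H -> R}) : Prop :=
  forall g : idx H, H (proj1_sig g) -> p g <= q g.

Definition compactification_le (H1 H2 : set (E -> R)) : Prop :=
  exists Cm : {ptws idx H2 -> R} -> {ptws idx H1 -> R},
    [/\ {within cE H2, continuous Cm},
        (forall p, cE H2 p -> cE H1 (Cm p)),
        (forall p q, cE H2 p -> cE H2 q -> le_c H2 p q -> le_c H1 (Cm p) (Cm q)) &
        (forall x, Cm (cmap H2 x) = cmap H1 x)].

Definition compactification_equiv (H1 H2 : set (E -> R)) : Prop :=
  compactification_le H1 H2 /\ compactification_le H2 H1.

(* i(H): f in F such that f o c^{-1} : c(E) -> [0,1] extends to a continuous
   isotone function (cE, <=_c) -> [0,1] *)
Definition iH (le : E -> E -> Prop) (H : set (E -> R)) : set (E -> R) :=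
  [set f : E -> R | famF le f /\
     exists phi : {ptws idx H -> R} -> R,
       [/\ {within cE H, continuous phi},
           (forall p, cE H p -> 0 <= phi p <= 1),
           (forall p q, cE H p -> cE H q -> le_c H p q -> phi p <= phi q) &
           (forall x, phi (cmap H x) = f x)]].

End PreorderCompactification.

From HB Require Import structures.
From mathcomp Require Import all_boot all_order all_algebra.
From mathcomp Require Import all_classical all_reals all_analysis.
Import Order.TTheory GRing.Theory Num.Theory numFieldNormedType.Exports.
Local Open Scope classical_set_scope.
Local Open Scope ring_scope.

(* Since [H] is contained in [i(H)], forgetting the coordinates indexed by
   [i(H) \ H] maps the [i(H)]-compactification onto the [H]-compactification.
   Conversely, every [f] in [i(H)] comes by definition with a continuous isotone
   extension [phi_f] to the [H]-compactification; sending [p] to the point whose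
   [f]-coordinate is [phi_f p] (and whose coordinates in [C] are those of [p])
   is continuous and isotone and commutes with the embeddings of [E]. Both maps
   send the compactifications into each other because a map that is continuous
   on the closure of [c(E)] sends it into the closure of the image of [c(E)]. *)

Lemma ptws_proj_continuous {R : realType} {I : Type} (i : I) :
  continuous (fun p : {ptws I -> R} => p i).
Proof. exact: (@proj_continuous {classic I} (fun _ => R) i). Qed.

Lemma ptws_cvg {R : realType} {T I : Type} (F : set_system T)
    (f : T -> {ptws I -> R}) (p : {ptws I -> R}) :
  Filter F -> (forall i, (fun t => f t i) @ F --> p i) -> f @ F --> p.
Proof.
have surj_proj i : range (fun q : {ptws I -> R} => q i) = [set: R].
  by rewrite eqEsubset; split => // y _; exists (fun _ => y).
move=> FF fi; apply/cvg_sup => i; apply/cvg_image; first exact: surj_proj.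
move=> B /fi FB; exists ((fun q : {ptws I -> R} => q i) @^-1` B); first exact: FB.
by rewrite image_preimage // surj_proj.
Qed.

Lemma within_closure_image {X Y : topologicalType} (A : set X) (f : X -> Y) :
  {within closure A, continuous f} ->
  forall p, closure A p -> closure (f @` A) (f p).
Proof.
move=> cf p cAp B Bfp.
have := (subspace_continuousP _ _).1 cf p cAp B Bfp.
rewrite /= nbhs_simpl /within /= => nW.
have [x [Ax Bx]] := cAp _ nW.
by exists (f x); split; [exists x | exact: Bx (subset_closure Ax)].
Qed.

Section CompactificationMaps.
Context {R : realType} {E : topologicalType}.
Implicit Types H : set (E -> R).

Lemma cE_image {H1 H2} (Cm : {ptws idx H2 -> R} -> {ptws idx H1 -> R}) :
  {within cE H2, continuous Cm} -> (forall x, Cm (cmap H2 x) = cmap H1 x) ->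
  forall p, cE H2 p -> cE H1 (Cm p).
Proof.
move=> cCm Cmc p /(within_closure_image _ _ cCm); apply: closureS.
by move=> _ [_ [x _ <-] <-]; exists x; rewrite ?Cmc.
Qed.

Lemma cE_coord_unit H (g : idx H) (p : {ptws idx H -> R}) :
  unit_valued (sval g) -> cE H p -> 0 <= p g <= 1.
Proof.
move=> g01; have unit_closed : closed [set q : {ptws idx H -> R} | 0 <= q g <= 1].
  have -> : [set q : {ptws idx H -> R} | 0 <= q g <= 1] =
      (fun q : {ptws idx H -> R} => q g) @^-1` ([set x : R | 0 <= x] `&` [set x | x <= 1]).
    by rewrite eqEsubset; split => q /=; [move/andP | case=> -> ->].
  apply: preimage_closed; first by move=> q _; exact: ptws_proj_continuous.
  by apply: closedI; [exact: closed_ge | exact: closed_le].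
move=> cEp; have : closure [set q : {ptws idx H -> R} | 0 <= q g <= 1] p.
  by apply: closureS cEp => _ [x _ <-]; exact: g01.
by rewrite -(closure_id _).1.
Qed.

Definition idx_widen {H1 H2} (H12 : H1 `<=` H2) (g : idx H1) : idx H2 :=
  exist _ (sval g) (setSU H12 (svalP g)).

Lemma compactification_le_subset H1 H2 :
  H1 `<=` H2 -> compactification_le H1 H2.
Proof.
move=> H12; pose Cm (p : {ptws idx H2 -> R}) : {ptws idx H1 -> R} :=
  fun g => p (idx_widen H12 g).
have cCm : continuous Cm.
  move=> p; apply: (ptws_cvg (nbhs p) Cm (Cm p)) => g.
  exact: (ptws_proj_continuous (idx_widen H12 g) p).
have cCmW : {within cE H2, continuous Cm} by exact: continuous_subspaceT.
exists Cm; split.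
- exact: cCmW.
- by apply: (cE_image Cm cCmW).
- by move=> p q _ _ lepq g /H12; exact: (lepq (idx_widen H12 g)).
- by [].
Qed.

Context (le : E -> E -> Prop).

Lemma subset_iH H : H `<=` famF le -> H `<=` iH le H.
Proof.
move=> HF h Hh; split; first exact: HF.
pose gh : idx H := exist _ h (or_introl Hh).
have [_ [h01 _]] := HF _ Hh.
exists (fun p => p gh); split => //.
- by apply: continuous_subspaceT; exact: ptws_proj_continuous.
- by move=> p; exact: cE_coord_unit.
- by move=> p q _ _ /(_ gh Hh).
Qed.

Definition iH_ext H (f : E -> R) : {ptws idx H -> R} -> R :=
  match pselect (iH le H f) with
  | left iHf => projT1 (cid (proj2 iHf))
  | right _ => fun _ => 0
  end.

Lemma iH_extP {H f} : iH le H f ->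
  [/\ {within cE H, continuous (iH_ext H f)},
      (forall p, cE H p -> 0 <= iH_ext H f p <= 1),
      (forall p q, cE H p -> cE H q -> le_c H p q -> iH_ext H f p <= iH_ext H f q) &
      (forall x, iH_ext H f (cmap H x) = f x)].
Proof.
by rewrite /iH_ext; case: pselect => // iHf _; exact: projT2 (cid (proj2 iHf)).
Qed.

Lemma idx_iH_famC {H} {g : idx (iH le H)} :
  ~ iH le H (sval g) -> (H `|` famC) (sval g).
Proof. by case: g => f [// | Cf] /= _; right. Qed.

Definition iH_lift {H} (p : {ptws idx H -> R}) : {ptws idx (iH le H) -> R} :=
  fun g => match pselect (iH le H (sval g)) with
  | left _ => iH_ext H (sval g) p
  | right niH => p (exist _ (sval g) (idx_iH_famC niH))
  end.

Lemma iH_liftE H p (g : idx (iH le H)) :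
  iH le H (sval g) -> iH_lift p g = iH_ext H (sval g) p.
Proof. by rewrite /iH_lift; case: pselect. Qed.

Lemma iH_lift_continuous H : {within cE H, continuous (@iH_lift H)}.
Proof.
apply/subspace_continuousP => p cEp.
apply: (ptws_cvg (within (cE H) (nbhs p)) iH_lift (iH_lift p)) => g.
rewrite /iH_lift; case: pselect => [iHg | niH].
  have [cext _ _ _] := iH_extP iHg.
  exact: (subspace_continuousP _ _).1 cext p cEp.
have := ptws_proj_continuous (exist _ (sval g) (idx_iH_famC niH)) p.
by apply: cvg_trans; apply: cvg_app; exact: cvg_within.
Qed.

Lemma iH_lift_cmap H x : iH_lift (cmap H x) = cmap (iH le H) x.
Proof.
apply/funext => g; rewrite /iH_lift; case: pselect => // iHg.
by have [_ _ _ ->] := iH_extP iHg.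
Qed.

Lemma compactification_le_iH H : compactification_le (iH le H) H.
Proof.
exists (@iH_lift H); split.
- exact: iH_lift_continuous.
- by apply: cE_image; [exact: iH_lift_continuous | exact: iH_lift_cmap].
- move=> p q cEp cEq lepq g iHg; rewrite !iH_liftE //.
  by have [_ _ ext_mono _] := iH_extP iHg; exact: ext_mono.
- exact: iH_lift_cmap.
Qed.

End CompactificationMaps.

Theorem mainTheorem14 (R : realType) (E : topologicalType) (le : E -> E -> Prop)
  (H : set (E -> R)) :
  loc_compact (E := E) ->
  hausdorff_space E -> completely_regular_space E ->
  is_preorder le -> T2_preordered le ->
  represents le (famF (R := R) le) ->
  H `<=` famF le -> represents le H ->
  compactification_equiv H (iH le H).
Proof.
move=> _ _ _ _ _ _ HF _; split.
- exact/compactification_le_subset/subset_iH.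
- exact: (compactification_le_iH le H).
Qed.
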